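(* Let $S$ be an anti-rectangular AG-groupoid. A nonempty subset $I\subseteq S$ is a left ideal of $S$ if and only if it is a right ideal of $S$.
   Context: An AG-groupoid is a set $S$ with a binary operation satisfying $(ab)c=(cb)a$ for all $a,b,c\in S$. It is anti-rectangular if $a=(ba)b$ for all $a,b\in S$. For nonempty subsets, $AB=\{ab:a\in A,b\in B\}$. A left ideal is a nonempty subset $I$ with $SI\subseteq I$; a right ideal is a nonempty subset $I$ with $IS\subseteq I$. *)

Definition AG_groupoid (S : Type) (op : S -> S -> S) : Prop :=
  forall a b c : S, op (op a b) c = op (op c b) a.

Definition anti_rectangular (S : Type) (op : S -> S -> S) : Prop :=
  forall a b : S, a = op (op b a) b.

Definition nonempty (S : Type) (I : S -> Prop) : Prop := exists x, I x.

Definition left_ideal (S : Type) (op : S -> S -> S) (I : S -> Prop) : Prop :=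
  nonempty S I /\ (forall s x : S, I x -> I (op s x)).

Definition right_ideal (S : Type) (op : S -> S -> S) (I : S -> Prop) : Prop :=
  nonempty S I /\ (forall x s : S, I x -> I (op x s)).


(* In an anti-rectangular AG-groupoid every product can be rewritten so that
   the "other" factor ends up on the required side:
     x s = (s s)(s x)     and     s x = (x (s x)) x.
   The first identity shows that a set closed under left multiplication is
   closed under right multiplication (x in I gives s x, then (s s)(s x) in I);
   the second shows the converse (x in I gives x (s x), then (x (s x)) x in I). *)

Section AntiRectangularAG.

Variable S : Type.
Variable op : S -> S -> S.
Hypothesis hAG : AG_groupoid S op.
Hypothesis hAR : anti_rectangular S op.

(* A right product rewritten as a left product of something involving x on
   the left: expand x = (s x) s, then apply the left invertive law. *)
Lemma right_mul_as_left_mul (x s : S) : op x s = op (op s s) (op s x).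
Proof.
  pattern x at 1; rewrite (hAR x s).
  apply hAG.
Qed.

Lemma left_mul_as_right_mul (s x : S) : op s x = op (op x (op s x)) x.
Proof. exact (hAR (op s x) x). Qed.

Lemma left_closed_right_closed (I : S -> Prop) :
  (forall s x, I x -> I (op s x)) -> (forall x s, I x -> I (op x s)).
Proof.
  intros Hleft x s Hx.
  rewrite right_mul_as_left_mul.
  exact (Hleft _ _ (Hleft _ _ Hx)).
Qed.

Lemma right_closed_left_closed (I : S -> Prop) :
  (forall x s, I x -> I (op x s)) -> (forall s x, I x -> I (op s x)).
Proof.
  intros Hright s x Hx.
  rewrite left_mul_as_right_mul.
  exact (Hright _ _ (Hright _ _ Hx)).
Qed.

End AntiRectangularAG.

Theorem lemma3 (S : Type) (op : S -> S -> S)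
  (hAG : AG_groupoid S op) (hAR : anti_rectangular S op)
  (I : S -> Prop) (hI : nonempty S I) :
  left_ideal S op I <-> right_ideal S op I.
Proof.
  split; intros [Hne Hclosed]; split; trivial.
  - exact (left_closed_right_closed S op hAG hAR I Hclosed).
  - exact (right_closed_left_closed S op hAR I Hclosed).
Qed.
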